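(* Consider the $\mathsf{HFOL}$ signatures: $\Delta$ with one nominal $k$, one flexible sort $Nat$ and flexible function symbols $0:\to Nat$, $succ:Nat\to Nat$; $\Delta^1$ with nominals $k,k_1$, one rigid sort $Nat$ and flexible function symbols $0:\to Nat$, $succ:Nat\to Nat$, $\_+\_:Nat\,Nat\to Nat$; $\Delta^2$ with nominals $k,k_2$, rigid sorts $Nat,List$ and flexible function symbols $0:\to Nat$, $succ:Nat\to Nat$, $nil:\to List$, $\_|\_:Nat\,List\to List$; $\Delta'$ with nominals $k,k_1,k_2$, rigid sorts $Nat,List$ and flexible function symbols $0$, $succ$, $\_+\_$, $nil$, and $\_|\_:Nat\,List\to List$. Let $\chi_1:\Delta\hookrightarrow\Delta^1$, $\chi_2:\Delta\hookrightarrow\Delta^2$, $\upsilon_1:\Delta^1\hookrightarrow\Delta'$, $\upsilon_2:\Delta^2\hookrightarrow\Delta'$ be the inclusions (this square is a pushout). Then this square is not a Craig Interpolation square.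
   Context: $\mathsf{HFOL}$ (hybrid first-order logic with rigid symbols): signatures $\Delta=(\Sigma^{\mathtt n},\Sigma^{\mathtt r}\subseteq\Sigma)$ with $\Sigma$ a many-sorted first-order signature, $\Sigma^{\mathtt r}$ its rigid part (interpreted identically in all worlds), $\Sigma^{\mathtt n}$ a single-sorted signature of nominals (constants) and modalities; signature morphisms are pairs of first-order signature morphisms mapping rigid symbols to rigid symbols. Kripke structures $(W,M)$: a $\Sigma^{\mathtt n}$-structure $W$ of worlds and $\Sigma$-structures $M_w$ agreeing on rigid symbols. Sentences are built from atoms (nominals, unary modalities, equations and relations between hybrid terms, where $@_k\sigma$ denotes $\sigma$ evaluated at world $W_k$) using $@_k$, $\neg$, finite $\vee$, store $\downarrow z$, existential (hence universal) quantification over nominal variables and variables of rigid sorts, and $\langle\lambda\rangle$; $(W,M)\models\varphi$ means $\varphi$ holds at every world; $\Phi\models\Psi$ is global consequence. A commutative square $\chi_1,\chi_2,\upsilon_1,\upsilon_2$ (with $\chi_i:\Delta\to\Delta^i$, $\upsilon_i:\Delta^i\to\Delta'$) is a Craig Interpolation (CI) square if for all $\Phi^1\subseteq\mathrm{Sen}(\Delta^1)$, $\Phi^2\subseteq\mathrm{Sen}(\Delta^2)$ with $\upsilon_1(\Phi^1)\models\upsilon_2(\Phi^2)$ there is $\Phi\subseteq\mathrm{Sen}(\Delta)$ with $\Phi^1\models\chi_1(\Phi)$ and $\chi_2(\Phi)\models\Phi^2$. *)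

(* A concrete rendering of HFOL (hybrid first-order logic with
   rigid symbols) for signatures built from the fixed symbol universe used in
   the statement (nominals k,k1,k2; sorts Nat,List; function symbols
   0, succ, +, nil, _|_), with no relation symbols and no modalities. *)
From Stdlib Require Import List Bool PeanoNat.
Import ListNotations.

Inductive nom : Type := k | k1 | k2.
Inductive sort : Type := Nat | List.
Inductive fsym : Type := zero | succ | plus | nil | cons.

Definition sort_eq_dec (s t : sort) : {s = t} + {s <> t}.
Proof. decide equality. Defined.

(* Function symbols have the fixed profiles
   0 : -> Nat, succ : Nat -> Nat, + : Nat Nat -> Nat, nil : -> List,
   _|_ : Nat List -> List; all function symbols are flexible. *)
Record sig : Type := Sig {
  nomP : nom -> bool;
  sortP : sort -> bool;
  rigS : sort -> bool;
  funP : fsym -> bool }.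

Inductive nterm : Type := NNom (i : nom) | NVar (z : nat).

(* hybrid terms; the optional nominal [a = Some j] turns the function
   symbol sigma into the rigidified symbol @_j sigma *)
Inductive term : sort -> Type :=
| tvar (s : sort) (x : nat) : term s
| tzero (a : option nterm) : term Nat
| tsucc (a : option nterm) : term Nat -> term Nat
| tplus (a : option nterm) : term Nat -> term Nat -> term Nat
| tnil (a : option nterm) : term List
| tcons (a : option nterm) : term Nat -> term List -> term List.

Inductive sen : Type :=
| SNom (j : nterm)
| SEq (s : sort) (t1 t2 : term s)
| SAt (j : nterm) (phi : sen)
| SNeg (phi : sen)
| SFalse
| SOr (phi psi : sen)
| SStore (z : nat) (phi : sen)
| SExN (z : nat) (phi : sen)
| SEx (s : sort) (x : nat) (phi : sen).

Definition wf_nterm (D : sig) (bn : list nat) (j : nterm) : Prop :=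
  match j with NNom i => nomP D i = true | NVar z => In z bn end.

Definition wf_at (D : sig) (bn : list nat) (a : option nterm) (ss : list sort) : Prop :=
  match a with
  | None => True
  | Some j => wf_nterm D bn j /\ Forall (fun s => rigS D s = true) ss
  end.

Fixpoint wf_term (D : sig) (bn : list nat) (bv : list (sort * nat)) {s : sort}
  (t : term s) : Prop :=
  match t with
  | tvar s x => In (s, x) bv
  | tzero a => funP D zero = true /\ wf_at D bn a [Nat]
  | tsucc a t1 => funP D succ = true /\ wf_at D bn a [Nat] /\ wf_term D bn bv t1
  | tplus a t1 t2 => funP D plus = true /\ wf_at D bn a [Nat] /\
                     wf_term D bn bv t1 /\ wf_term D bn bv t2
  | tnil a => funP D nil = true /\ wf_at D bn a [List]
  | tcons a t1 t2 => funP D cons = true /\ wf_at D bn a [Nat; List] /\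
                     wf_term D bn bv t1 /\ wf_term D bn bv t2
  end.

Fixpoint wf_sen (D : sig) (bn : list nat) (bv : list (sort * nat)) (phi : sen) : Prop :=
  match phi with
  | SNom j => wf_nterm D bn j
  | SEq s t1 t2 => sortP D s = true /\ wf_term D bn bv t1 /\ wf_term D bn bv t2
  | SAt j p => wf_nterm D bn j /\ wf_sen D bn bv p
  | SNeg p => wf_sen D bn bv p
  | SFalse => True
  | SOr p q => wf_sen D bn bv p /\ wf_sen D bn bv q
  | SStore z p => wf_sen D (z :: bn) bv p
  | SExN z p => wf_sen D (z :: bn) bv p
  | SEx s x p => sortP D s = true /\ rigS D s = true /\ wf_sen D bn ((s, x) :: bv) p
  end.

Definition Sen (D : sig) (phi : sen) : Prop := wf_sen D [] [] phi.

Definition carT (rig : sort -> bool) (W : Type) (rc : sort -> Type)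
  (fc : W -> sort -> Type) (w : W) (s : sort) : Type :=
  if rig s then rc s else fc w s.

(* Kripke structures whose rigid sorts (according to [rig]) have a single
   carrier shared by all worlds; flexible sorts have per-world carriers.
   All symbols of the universe are interpreted (symbols absent from a
   signature are simply ignored by its sentences). *)
Record kripke (rig : sort -> bool) : Type := Kripke {
  W : Type;
  nomI : nom -> W;
  rcar : sort -> Type;
  fcar : W -> sort -> Type;
  zeroI : forall w, carT rig W rcar fcar w Nat;
  succI : forall w, carT rig W rcar fcar w Nat -> carT rig W rcar fcar w Nat;
  plusI : forall w, carT rig W rcar fcar w Nat -> carT rig W rcar fcar w Nat ->
                    carT rig W rcar fcar w Nat;
  nilI : forall w, carT rig W rcar fcar w List;
  consI : forall w, carT rig W rcar fcar w Nat -> carT rig W rcar fcar w List ->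
                    carT rig W rcar fcar w List }.

Arguments W {rig}. Arguments nomI {rig}. Arguments rcar {rig}. Arguments fcar {rig}.
Arguments zeroI {rig}. Arguments succI {rig}. Arguments plusI {rig}.
Arguments nilI {rig}. Arguments consI {rig}.

Section Semantics.
Variable rig : sort -> bool.
Variable M : kripke rig.

Definition car (w : W M) (s : sort) : Type := carT rig (W M) (rcar M) (fcar M) w s.

Definition dflt (w : W M) (s : sort) : car w s :=
  match s as s0 return car w s0 with Nat => zeroI M w | List => nilI M w end.

(* move a value of a rigid sort between worlds (identity, since the carrier
   is shared); the default branch is only reached on ill-formed input *)
Definition move (w w' : W M) (s : sort) (x : car w s) : car w' s :=
  (match rig s as b return
     ((if b then rcar M s else fcar M w s) ->
      (if b then rcar M s else fcar M w' s) ->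
      (if b then rcar M s else fcar M w' s)) with
   | true => fun x _ => x
   | false => fun _ d => d
   end) x (dflt w' s).

Definition ofR (w : W M) (s : sort) (a : rcar M s) : car w s :=
  (match rig s as b return
     (rcar M s -> (if b then rcar M s else fcar M w s) ->
      (if b then rcar M s else fcar M w s)) with
   | true => fun a _ => a
   | false => fun _ d => d
   end) a (dflt w s).

Definition nval := nat -> W M.
Definition vval := forall s : sort, nat -> option (rcar M s).

Definition updN (rn : nval) (z : nat) (v : W M) : nval :=
  fun n => if Nat.eqb n z then v else rn n.

Definition updV (rv : vval) (s : sort) (x : nat) (a : rcar M s) : vval :=
  fun s' n =>
    match sort_eq_dec s s' with
    | left e => if Nat.eqb n x then Some (eq_rect s (rcar M) a s' e) else rv s' n
    | right _ => rv s' n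
    end.

Definition evalN (rn : nval) (j : nterm) : W M :=
  match j with NNom i => nomI M i | NVar z => rn z end.

Definition wat (rn : nval) (w : W M) (a : option nterm) : W M :=
  match a with None => w | Some j => evalN rn j end.

Fixpoint evalT (rn : nval) (rv : vval) (w : W M) {s : sort} (t : term s) : car w s :=
  match t in term s0 return car w s0 with
  | tvar s x => match rv s x with Some a => ofR w s a | None => dflt w s end
  | tzero a => move (wat rn w a) w Nat (zeroI M (wat rn w a))
  | tsucc a t1 =>
      move (wat rn w a) w Nat
        (succI M (wat rn w a) (move w (wat rn w a) Nat (evalT rn rv w t1)))
  | tplus a t1 t2 =>
      move (wat rn w a) w Nat
        (plusI M (wat rn w a) (move w (wat rn w a) Nat (evalT rn rv w t1))
                              (move w (wat rn w a) Nat (evalT rn rv w t2)))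
  | tnil a => move (wat rn w a) w List (nilI M (wat rn w a))
  | tcons a t1 t2 =>
      move (wat rn w a) w List
        (consI M (wat rn w a) (move w (wat rn w a) Nat (evalT rn rv w t1))
                              (move w (wat rn w a) List (evalT rn rv w t2)))
  end.

Fixpoint satL (rn : nval) (rv : vval) (w : W M) (phi : sen) : Prop :=
  match phi with
  | SNom j => w = evalN rn j
  | SEq s t1 t2 => evalT rn rv w t1 = evalT rn rv w t2
  | SAt j p => satL rn rv (evalN rn j) p
  | SNeg p => ~ satL rn rv w p
  | SFalse => False
  | SOr p q => satL rn rv w p \/ satL rn rv w q
  | SStore z p => satL (updN rn z w) rv w p
  | SExN z p => exists v : W M, satL (updN rn z v) rv w p
  | SEx s x p => rig s = true /\ exists a : rcar M s, satL rn (updV rv s x a) w p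
  end.

Definition sat (phi : sen) : Prop :=
  forall w : W M, satL (fun _ => nomI M k) (fun _ _ => None) w phi.

End Semantics.

Definition gcons (D : sig) (Phi Psi : sen -> Prop) : Prop :=
  forall M : kripke (rigS D),
    (forall phi, Phi phi -> sat (rigS D) M phi) -> forall psi, Psi psi -> sat (rigS D) M psi.

(* A commutative square of signature INCLUSIONS D -> D1, D2 -> D' (sentence
   translation along inclusions is the identity on raw syntax) is a Craig
   Interpolation square. *)
Definition CI_square (D D1 D2 D' : sig) : Prop :=
  forall Phi1 Phi2 : sen -> Prop,
    (forall phi, Phi1 phi -> Sen D1 phi) ->
    (forall phi, Phi2 phi -> Sen D2 phi) ->
    gcons D' Phi1 Phi2 ->
    exists Phi : sen -> Prop,
      (forall phi, Phi phi -> Sen D phi) /\ gcons D1 Phi1 Phi /\ gcons D2 Phi Phi2.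

Definition incl (D D' : sig) : Prop :=
  (forall i, nomP D i = true -> nomP D' i = true) /\
  (forall s, sortP D s = true -> sortP D' s = true) /\
  (forall s, sortP D s = true -> rigS D s = true -> rigS D' s = true) /\
  (forall f, funP D f = true -> funP D' f = true).

Definition Delta : sig := {|
  nomP := fun i => match i with k => true | _ => false end;
  sortP := fun s => match s with Nat => true | List => false end;
  rigS := fun _ => false;
  funP := fun f => match f with zero | succ => true | _ => false end |}.

Definition Delta1 : sig := {|
  nomP := fun i => match i with k | k1 => true | k2 => false end;
  sortP := fun s => match s with Nat => true | List => false end;
  rigS := fun _ => true;
  funP := fun f => match f with zero | succ | plus => true | _ => false end |}.

Definition Delta2 : sig := {|
  nomP := fun i => match i with k | k2 => true | k1 => false end;
  sortP := fun _ => true;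
  rigS := fun _ => true;
  funP := fun f => match f with plus => false | _ => true end |}.

Definition Delta' : sig := {|
  nomP := fun _ => true;
  sortP := fun _ => true;
  rigS := fun _ => true;
  funP := fun _ => true |}.

From Stdlib Require Import List.
Import ListNotations.

(* Delta has no rigid sort, so its sentences cannot quantify over Nat; in a
   model with a single world the only other ingredients, nominal atoms and
   equations between terms built from 0 and succ, are all true as soon as
   every such equation holds.  Hence Delta cannot distinguish the one-world
   model with Nat = unit from the one-world model with Nat = bool, 0 = false
   and succ = id.  The sentence "Nat has at most one element", which is in
   Sen(Delta1) and Sen(Delta2) because Nat is rigid there, entails itself over
   Delta'; any Delta-interpolant would hold in the first model, where the
   sentence is true, hence in the second, where it is false. *)

Definition single_world {rig} (M : kripke rig) : Prop := forall u v : W M, u = v.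

Definition validates_Delta_equations {rig} (M : kripke rig) : Prop :=
  forall bn s (t1 t2 : term s) rn rv w,
    wf_term Delta bn [] t1 -> wf_term Delta bn [] t2 ->
    evalT rig M rn rv w t1 = evalT rig M rn rv w t2.

Lemma satL_Delta_iff rig (M : kripke rig) rig' (N : kripke rig') :
  single_world M -> single_world N ->
  validates_Delta_equations M -> validates_Delta_equations N ->
  forall phi bn, wf_sen Delta bn [] phi ->
  forall rnM rvM wM rnN rvN wN,
    satL rig M rnM rvM wM phi <-> satL rig' N rnN rvN wN phi.
Proof.
  intros oneM oneN eqM eqN phi.
  induction phi as [j | s t1 t2 | j phi IH | phi IH | | phi IH psi IH' | z phi IH
                   | z phi IH | s x phi IH]; intros bn Hwf rnM rvM wM rnN rvN wN; simpl in *.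
  - split; intros _; [apply oneN | apply oneM].
  - destruct Hwf as [_ [H1 H2]]. split; intros _; [apply (eqN bn) | apply (eqM bn)]; assumption.
  - apply (IH bn), Hwf.
  - rewrite (IH bn Hwf rnM rvM wM rnN rvN wN). reflexivity.
  - reflexivity.
  - destruct Hwf as [Hphi Hpsi].
    rewrite (IH bn Hphi rnM rvM wM rnN rvN wN), (IH' bn Hpsi rnM rvM wM rnN rvN wN).
    reflexivity.
  - apply (IH (z :: bn)), Hwf.
  - split; intros [v Hv].
    + exists (nomI N k). eapply (IH (z :: bn) Hwf). exact Hv.
    + exists (nomI M k). eapply (IH (z :: bn) Hwf). exact Hv.
  - destruct Hwf as [_ [Hrig _]]. discriminate Hrig.
Qed.

Lemma sat_transfer_Delta rig (M : kripke rig) rig' (N : kripke rig') phi :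
  single_world M -> single_world N ->
  validates_Delta_equations M -> validates_Delta_equations N ->
  Sen Delta phi -> sat rig M phi -> sat rig' N phi.
Proof.
  intros oneM oneN eqM eqN Hphi HM w.
  apply (satL_Delta_iff rig M rig' N oneM oneN eqM eqN phi [] Hphi
           (fun _ => nomI M k) (fun _ _ => None) (nomI M k)).
  apply HM.
Qed.

Lemma wf_at_Delta_None bn a s ss : wf_at Delta bn a (s :: ss) -> a = None.
Proof.
  destruct a as [j |]; [| reflexivity].
  intros [_ Hrig]. apply Forall_inv in Hrig. discriminate Hrig.
Qed.

Definition unit_model : kripke (fun _ => true) :=
  @Kripke (fun _ => true) unit (fun _ => tt) (fun _ => unit) (fun _ _ => unit)
    (fun _ => tt) (fun _ n => n) (fun _ m _ => m) (fun _ => tt) (fun _ _ l => l).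

Definition bool_car (s : sort) : Type := match s with Nat => bool | List => unit end.

Definition bool_model : kripke (fun _ => true) :=
  @Kripke (fun _ => true) unit (fun _ => tt) bool_car (fun _ _ => unit)
    (fun _ => false) (fun _ n => n) (fun _ m _ => m) (fun _ => tt) (fun _ _ l => l).

Lemma single_world_unit_model : single_world unit_model.
Proof. intros [] []. reflexivity. Qed.

Lemma single_world_bool_model : single_world bool_model.
Proof. intros [] []. reflexivity. Qed.

Lemma unit_model_Delta_equations : validates_Delta_equations unit_model.
Proof.
  intros bn s t1 t2 rn rv w _ _.
  destruct (evalT _ unit_model rn rv w t1), (evalT _ unit_model rn rv w t2). reflexivity.
Qed.

Lemma evalT_bool_model_Delta bn s (t : term s) rn rv w :
  wf_term Delta bn [] t -> evalT _ bool_model rn rv w t = dflt _ bool_model w s.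
Proof.
  induction t as [s x | a | a t IH | a t1 _ t2 _ | a | a t1 _ t2 _]; simpl.
  - intros [].
  - intros [_ Ha]. rewrite (wf_at_Delta_None bn a Nat [] Ha). reflexivity.
  - intros [_ [Ha Ht]]. rewrite (wf_at_Delta_None bn a Nat [] Ha). exact (IH Ht).
  - intros [Hplus _]. discriminate Hplus.
  - intros [Hnil _]. discriminate Hnil.
  - intros [Hcons _]. discriminate Hcons.
Qed.

Lemma bool_model_Delta_equations : validates_Delta_equations bool_model.
Proof.
  intros bn s t1 t2 rn rv w H1 H2.
  rewrite (evalT_bool_model_Delta bn s t1 rn rv w H1), (evalT_bool_model_Delta bn s t2 rn rv w H2).
  reflexivity.
Qed.

Definition at_most_one_nat : sen :=
  SNeg (SEx Nat 0 (SEx Nat 1 (SNeg (SEq Nat (tvar Nat 0) (tvar Nat 1))))).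

Lemma sat_at_most_one_nat (M : kripke (fun _ => true)) :
  sat _ M at_most_one_nat <-> ~ exists a b : rcar M Nat, a <> b.
Proof.
  split.
  - intros H [a [b Hab]]. apply (H (nomI M k)). cbn.
    split; [reflexivity |]. exists a. split; [reflexivity |]. exists b. exact Hab.
  - intros H w. cbn. intros [_ [a [_ [b Hab]]]]. apply H. exists a, b. exact Hab.
Qed.

Lemma Sen_at_most_one_nat D :
  sortP D Nat = true -> rigS D Nat = true -> Sen D at_most_one_nat.
Proof.
  intros Hsort Hrig. cbn.
  repeat split; try assumption; [right; left | left]; reflexivity.
Qed.

Lemma gcons_refl D Phi : gcons D Phi Phi.
Proof. intros M HM. exact HM. Qed.

Theorem lemma5p16 : ~ CI_square Delta Delta1 Delta2 Delta'.
Proof.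
  intro HCI.
  destruct (HCI (eq at_most_one_nat) (eq at_most_one_nat)) as [Phi [HPhi [H1 H2]]].
  - intros phi <-. apply Sen_at_most_one_nat; reflexivity.
  - intros phi <-. apply Sen_at_most_one_nat; reflexivity.
  - apply gcons_refl.
  - assert (unit_sat : sat _ unit_model at_most_one_nat).
    { apply sat_at_most_one_nat. intros [[] [[] Hneq]]. apply Hneq. reflexivity. }
    assert (bool_sat_Phi : forall phi, Phi phi -> sat _ bool_model phi).
    { intros phi Hphi.
      apply (sat_transfer_Delta _ unit_model _ bool_model phi single_world_unit_model
               single_world_bool_model unit_model_Delta_equations bool_model_Delta_equations
               (HPhi phi Hphi)).
      apply (H1 unit_model); [intros psi <-; exact unit_sat | exact Hphi]. }
    apply (proj1 (sat_at_most_one_nat bool_model) (H2 bool_model bool_sat_Phi _ eq_refl)).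
    exists true, false. discriminate.
Qed.
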